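(* Let $L$ be a finite graded lattice of rank $n$. Then $L$ is supersolvable if and only if $L$ admits an $S_n$ EL-labeling.
   Context: For a finite graded poset $P$ of rank $n$ with least element $\hat0$ and greatest element $\hat1$, let $\mathcal{E}(P)=\{(s,t): t \text{ covers } s\}$ be the set of edges of its Hasse diagram. An edge-labeling is a map $\lambda:\mathcal{E}(P)\to\mathbb{Z}$. For a maximal chain $s=s_0<s_1<\cdots<s_k=t$ of an interval $[s,t]$, its label sequence is $(\lambda(s_0,s_1),\dots,\lambda(s_{k-1},s_k))$; the chain is increasing if this sequence is weakly increasing. An EL-labeling is an edge-labeling such that every interval $[s,t]$ has exactly one increasing maximal chain, and the label sequence of that chain is strictly lexicographically smaller than that of every other maximal chain of $[s,t]$. An $S_n$ EL-labeling is an EL-labeling such that for every maximal chain $\hat0=x_0<x_1<\cdots<x_n=\hat1$ of $P$, the sequence $(\lambda(x_0,x_1),\dots,\lambda(x_{n-1},x_n))$ is a permutation of $[n]=\{1,\dots,n\}$. A finite lattice $L$ is supersolvable if it contains a maximal chain (an M-chain) which, together with any other chain of $L$, generates a distributive sublattice of $L$. *)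

From mathcomp Require Import all_boot all_order all_algebra.
Set Implicit Arguments. Unset Strict Implicit. Unset Printing Implicit Defensive.
Import Order.TTheory GRing.Theory Num.Theory.

(* A finite lattice with least element \bot and greatest element \top is a
   [finTBLatticeType d]. *)
Section Defs.
Context {disp : Order.disp_t} {L : finTBLatticeType disp}.
Local Open Scope order_scope.

(* y covers x *)
Definition covers (x y : L) : bool :=
  (x < y) && [forall z : L, ~~ ((x < z) && (z < y))].

(* A maximal chain s = s_0 < s_1 < ... < s_k = t of the interval [s,t],
   represented by the sequence c = [:: s_1; ...; s_k] (each s_{i+1} covers s_i). *)
Definition maxchain (s t : L) (c : seq L) : bool :=
  path covers s c && (last s c == t).

Definition graded_rank (n : nat) : Prop :=
  forall c : seq L, maxchain \bot \top c -> size c = n.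

(* edge labelings: only the values on covering pairs matter *)
Definition labeling := L -> L -> int.

Definition labels (lam : labeling) (s : L) (c : seq L) : seq int :=
  pairmap lam s c.

Definition increasing (w : seq int) : bool :=
  sorted (fun a b : int => (a <= b)%R) w.

Fixpoint lexlt (u v : seq int) : bool :=
  match u, v with
  | [::], [::] => false
  | [::], _ :: _ => true
  | _ :: _, [::] => false
  | a :: u', b :: v' => ((a < b)%R) || ((a == b) && lexlt u' v')
  end.

Definition EL_labeling (lam : labeling) : Prop :=
  forall s t : L, s <= t ->
    exists c : seq L,
      [/\ maxchain s t c, increasing (labels lam s c)
        & forall c' : seq L, maxchain s t c' -> c' != c ->
            ~~ increasing (labels lam s c') /\
            lexlt (labels lam s c) (labels lam s c')].

Definition Sn_EL_labeling (n : nat) (lam : labeling) : Prop :=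
  EL_labeling lam /\
  forall c : seq L, maxchain \bot \top c ->
    perm_eq (labels lam \bot c) (map Posz (iota 1 n)).

Definition is_chain (C : {set L}) : bool :=
  [forall x in C, forall y in C, (x <= y) || (y <= x)].

Definition meet_join_closed (S : {set L}) : bool :=
  [forall x in S, forall y in S, (x `&` y \in S) && (x `|` y \in S)].

Definition gen_sublattice (A : {set L}) : {set L} :=
  \bigcap_(S : {set L} | (A \subset S) && meet_join_closed S) S.

Definition distributive_set (S : {set L}) : bool :=
  [forall x in S, forall y in S, forall z in S,
     x `&` (y `|` z) == (x `&` y) `|` (x `&` z)].

Definition supersolvable : Prop :=
  exists c : seq L, maxchain \bot \top c /\
    forall C : {set L}, is_chain C ->
      distributive_set (gen_sublattice ([set x in \bot :: c] :|: C)).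

End Defs.

From mathcomp Require Import all_boot all_order all_algebra.
Set Implicit Arguments. Unset Strict Implicit. Unset Printing Implicit Defensive.
Import Order.TTheory GRing.Theory Num.Theory.

(* An M-chain [\bot = m_0 <. ... <. m_n = \top] and an S_n EL-labeling both
   amount to a map [D] from [L] to subsets of [{0, ..., n-1}] (the labels below
   [x], shifted by one) that is strictly monotone, sends [m_j] to [{i | i < j}]
   and satisfies [i \in D (m_j `&` z)] for [i < j] and [i \in D z], and
   [i \in D (y `|` m_j) -> i \in D y] for [j <= i] (a [label_sets] structure).
   For an M-chain, [D x = {i | ~~ (m_(i+1) `&` x <= m_i)}] (Bjoerner's labels),
   and the identities are instances of distributivity in the sublattice
   generated by the M-chain and a two-element chain.  For an S_n EL-labeling,
   [D x] is the label set of any maximal chain of [\bot, x], the [m_j] are the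
   elements of the increasing maximal chain, and the identities come from
   truncating increasing chains.
   Conversely, given [D], labelling a cover [x <. y] by [1 + (D y :\: D x)] is an
   S_n EL-labeling whose increasing chains add the least missing label at each
   step, and for any chain [K] the joins [\join_i (m_i `&` f_i)] over decreasing
   [K]-valued sequences [f] form a distributive sublattice containing the [m_j]
   and [K]. *)

Section MaximalChains.
Context {disp : Order.disp_t} {L : finTBLatticeType disp}.
Local Open Scope order_scope.
Implicit Types (x y z s t u v : L) (c : seq L).

Lemma coversW x y : covers x y -> x < y.
Proof. by case/andP. Qed.

Lemma covers_le_eq x y z : covers x y -> x < z -> z <= y -> z = y.
Proof.
move=> /andP[_ /forallP /(_ z)] noz xz zy; apply/eqP; apply: contraNT noz => zny.
by rewrite xz lt_neqAle zny zy.
Qed.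

Lemma maxchain_nil s t : maxchain s t [::] = (s == t).
Proof. by []. Qed.

Lemma maxchain_cons s t v c :
  maxchain s t (v :: c) = covers s v && maxchain v t c.
Proof. by rewrite /maxchain /= andbA. Qed.

Lemma maxchain_last s t c : maxchain s t c -> last s c = t.
Proof. by case/andP => _ /eqP. Qed.

Lemma maxchain_le s t c : maxchain s t c -> s <= t.
Proof.
elim: c s => [|v c IH] s; first by rewrite maxchain_nil => /eqP->.
by rewrite maxchain_cons => /andP[/coversW/ltW sv /IH]; apply: le_trans.
Qed.

Lemma maxchain_cat s u t c1 c2 :
  maxchain s u c1 -> maxchain u t c2 -> maxchain s t (c1 ++ c2).
Proof. by rewrite /maxchain cat_path last_cat => /andP[-> /eqP->] /andP[-> ->]. Qed.

Lemma maxchain_split s t c1 c2 : maxchain s t (c1 ++ c2) ->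
  maxchain s (last s c1) c1 /\ maxchain (last s c1) t c2.
Proof.
by rewrite /maxchain cat_path last_cat => /andP[/andP[-> ->] ->]; rewrite eqxx.
Qed.

Lemma maxchain_self s c : maxchain s s c -> c = [::].
Proof.
case: c => // v c; rewrite maxchain_cons => /andP[/coversW sv /maxchain_le vs].
by have := lt_le_trans sv vs; rewrite ltxx.
Qed.

Lemma exists_covers_le s t : s < t -> exists2 v, covers s v & v <= t.
Proof.
move=> st; pose P := [pred v | (s < v) && (v <= t)].
have Pt : P t by rewrite /P /= st lexx.
case: (arg_minnP (fun v => #|[set z | z < v]|) Pt) => v /andP[sv vt] vmin.
exists v => //; apply/andP; split => //; apply/forallP => z.
apply/negP => /andP[sz zv]; have := vmin z; rewrite /P /= sz (le_trans (ltW zv) vt).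
move=> /(_ isT); apply/negP; rewrite -ltnNge; apply: proper_card.
apply/properP; split; last by exists z; rewrite !inE ?zv ?ltxx.
by apply/subsetP => w; rewrite !inE => /lt_trans; apply.
Qed.

Lemma exists_maxchain s t : s <= t -> exists c, maxchain s t c.
Proof.
move: {2}_.+1 (ltnSn #|[set z | s <= z]|) => k.
elim: k s => // k IH s; rewrite ltnS => sizes st.
have [<-|nst] := eqVneq s t; first by exists [::]; rewrite maxchain_nil.
have [v sv vt] : exists2 v, covers s v & v <= t.
  by apply: exists_covers_le; rewrite lt_neqAle nst st.
have /IH /(_ vt) [c vc] : #|[set z | v <= z]| < k.
  apply: leq_trans sizes; apply: proper_card; apply/properP; split.
    by apply/subsetP => z; rewrite !inE; apply: le_trans (ltW (coversW sv)).
  by exists s; rewrite !inE ?lexx // lt_geF ?coversW.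
by exists (v :: c); rewrite maxchain_cons sv.
Qed.

End MaximalChains.

Section Sublattices.
Context {disp : Order.disp_t} {L : finTBLatticeType disp}.
Local Open Scope order_scope.
Implicit Types (x y z : L) (A S T : {set L}).

Lemma sub_gen_sublattice A : A \subset gen_sublattice A.
Proof. by apply/bigcapsP => S /andP[]. Qed.

Lemma gen_sublattice_min A S :
  A \subset S -> meet_join_closed S -> gen_sublattice A \subset S.
Proof. by move=> AS closedS; apply: bigcap_inf; rewrite AS closedS. Qed.

Lemma gen_sublatticeI A x y : x \in gen_sublattice A -> y \in gen_sublattice A ->
  x `&` y \in gen_sublattice A.
Proof.
move=> /bigcapP xA /bigcapP yA; apply/bigcapP => S PS.
move: (PS) => /andP[_ /forall_inP /(_ x (xA _ PS)) /forall_inP /(_ y (yA _ PS))].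
by case/andP.
Qed.

Lemma meetUr_in S x y z : distributive_set S -> x \in S -> y \in S -> z \in S ->
  x `&` (y `|` z) = (x `&` y) `|` (x `&` z).
Proof.
move=> /forall_inP /(_ x) dS xS yS zS; apply/eqP.
by move: (dS xS) => /forall_inP /(_ y yS) /forall_inP /(_ z zS).
Qed.

Lemma distributive_setS S T :
  S \subset T -> distributive_set T -> distributive_set S.
Proof.
move=> /subsetP ST dT; apply/forall_inP => x xS; apply/forall_inP => y yS.
by apply/forall_inP => z zS; rewrite (meetUr_in dT) ?ST.
Qed.

Lemma comparable_meetUr x y z : y >=< z -> x `&` (y `|` z) = (x `&` y) `|` (x `&` z).
Proof.
by case/orP => yz; [rewrite !join_r // leI2 | rewrite !join_l // leI2].
Qed.

End Sublattices.

Section ChainElements.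
Context {disp : Order.disp_t} {L : finTBLatticeType disp}.
Local Open Scope order_scope.
Variable c : seq L.

Definition chain_elt (j : nat) : L := nth \bot (\bot :: c) j.

Lemma mem_chain_elt j : (j <= size c)%N -> chain_elt j \in \bot :: c.
Proof. by move=> jc; rewrite mem_nth. Qed.

Lemma chain_eltP x : x \in \bot :: c -> exists2 j, (j <= size c)%N & x = chain_elt j.
Proof.
move=> xc; exists (index x (\bot :: c)); last by rewrite /chain_elt nth_index.
by rewrite -ltnS -[(size c).+1]/(size (\bot :: c)) index_mem.
Qed.

Lemma last_take_chain_elt j : (j <= size c)%N -> last \bot (take j c) = chain_elt j.
Proof.
move=> jc; rewrite (last_nth \bot) size_takel //.
by case: j jc => //= j jc; rewrite nth_take.
Qed.

Hypothesis chain_c : maxchain \bot \top c.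

Lemma chain_elt_size : chain_elt (size c) = \top.
Proof.
rewrite /chain_elt -[size c]/((size (\bot :: c)).-1) nth_last /=.
exact: maxchain_last chain_c.
Qed.

Lemma chain_elt_covers i : (i < size c)%N -> covers (chain_elt i) (chain_elt i.+1).
Proof. by move: chain_c => /andP[/pathP cov _] ic; apply: cov. Qed.

Lemma le_chain_elt i j : (i <= j)%N -> (j <= size c)%N -> chain_elt i <= chain_elt j.
Proof.
move=> /subnKC <-; elim: (j - i)%N => [|k IH]; rewrite ?addn0 // addnS => kc.
exact: le_trans (IH (ltnW kc)) (ltW (coversW (chain_elt_covers kc))).
Qed.

Lemma lt_chain_elt i j : (i < j)%N -> (j <= size c)%N -> chain_elt i < chain_elt j.
Proof.
move=> ij jc; apply: lt_le_trans (coversW (chain_elt_covers (leq_trans ij jc))) _.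
exact: le_chain_elt.
Qed.

End ChainElements.

Section LabelSequences.
Context {disp : Order.disp_t} {L : finTBLatticeType disp}.
Local Open Scope order_scope.
Implicit Types (lam : labeling (L := L)) (s t : L) (c : seq L).

Definition EL_interval lam s t : Prop :=
  exists c, [/\ maxchain s t c, increasing (labels lam s c)
    & forall c', maxchain s t c' -> c' != c ->
        ~~ increasing (labels lam s c') /\ lexlt (labels lam s c) (labels lam s c')].

Lemma uniq_iota_Posz n : uniq (map Posz (iota 1 n)).
Proof. by rewrite map_inj_uniq ?iota_uniq //; move=> a b []. Qed.

Lemma mem_iota_Posz n (i : 'I_n) : Posz i.+1 \in map Posz (iota 1 n).
Proof. by apply/mapP; exists i.+1; rewrite // mem_iota add1n !ltnS ltn_ord. Qed.

Lemma mem_iota_PoszP n l : l \in map Posz (iota 1 n) -> exists i : 'I_n, l = Posz i.+1.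
Proof.
case/mapP => k; rewrite mem_iota add1n => /andP[k_gt0 kn] ->.
have kn' : (k.-1 < n)%N by rewrite prednK.
by exists (Ordinal kn'); rewrite /= prednK.
Qed.

Lemma increasing_cons (a : int) w :
  increasing (a :: w) = all (fun b => a <= b)%R w && increasing w.
Proof. by rewrite /increasing /= path_sortedE //; apply: le_trans. Qed.

Lemma increasing_cat (w1 w2 : seq int) : increasing w1 -> increasing w2 ->
  {in w1 & w2, forall a b, a <= b}%R -> increasing (w1 ++ w2).
Proof.
rewrite /increasing !(sorted_pairwise le_trans) pairwise_cat => -> -> w12.
by rewrite !andbT; apply/allrelP.
Qed.

Lemma labels_cons lam s v c : labels lam s (v :: c) = lam s v :: labels lam v c.
Proof. by []. Qed.

Lemma labels_cat lam s c1 c2 :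
  labels lam s (c1 ++ c2) = labels lam s c1 ++ labels lam (last s c1) c2.
Proof. exact: pairmap_cat. Qed.

End LabelSequences.

Section LabelSetsDef.
Context {disp : Order.disp_t} {L : finTBLatticeType disp}.
Local Open Scope order_scope.

Record label_sets (n : nat) (c : seq L) (D : L -> {set 'I_n}) : Prop := LabelSets {
  D_chain_elt : forall j, (j <= n)%N -> D (chain_elt c j) = [set i : 'I_n | (i < j)%N];
  D_mono : forall x y, x <= y -> D x \subset D y;
  D_inj : forall x y, x <= y -> D y \subset D x -> x = y;
  D_meet_chain_elt : forall (i : 'I_n) j z,
    (i < j)%N -> (j <= n)%N -> i \in D z -> i \in D (chain_elt c j `&` z);
  D_join_chain_elt : forall (i : 'I_n) j y,
    (j <= i)%N -> i \in D (y `|` chain_elt c j) -> i \in D y }.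

End LabelSetsDef.

Section LabelSetsTheory.
Context {disp : Order.disp_t} {L : finTBLatticeType disp}.
Local Open Scope order_scope.
Variables (n : nat) (c : seq L) (D : L -> {set 'I_n}).
Hypotheses (chain_c : maxchain \bot \top c) (size_c : size c = n).
Hypothesis D_c : label_sets c D.
Local Notation m := (chain_elt c).

Lemma mem_D_le x y i : x <= y -> i \in D x -> i \in D y.
Proof. by move/(D_mono D_c)/subsetP; apply. Qed.

Lemma le_m i j : (i <= j)%N -> (j <= n)%N -> m i <= m j.
Proof. by rewrite -size_c; apply: le_chain_elt. Qed.

Section ChainJoins.
Variable K : {set L}.
Hypothesis chainK : {in K &, forall a b, a >=< b}.

Definition antitone_in : {set {ffun 'I_n.+1 -> L}} :=
  [set f : {ffun 'I_n.+1 -> L} | [forall i, f i \in K] &&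
     [forall i : 'I_n.+1, forall j : 'I_n.+1, (i <= j)%N ==> (f j <= f i)]].

Lemma antitone_inP (f : {ffun 'I_n.+1 -> L}) : reflect
  ((forall i, f i \in K) /\ (forall i j : 'I_n.+1, (i <= j)%N -> f j <= f i))
  (f \in antitone_in).
Proof.
rewrite inE; apply: (iffP andP) => [[/forallP fK /forallP fdec]|[fK fdec]].
  by split=> // i j; move: (fdec i) => /forallP /(_ j) /implyP.
by split; apply/forallP => // i; apply/forallP => j; apply/implyP; apply: fdec.
Qed.

Definition chain_join (f : {ffun 'I_n.+1 -> L}) : L := \join_(i : 'I_n.+1) (m i `&` f i).

Lemma chain_join_le (f g : {ffun 'I_n.+1 -> L}) :
  (forall i, f i <= g i) -> chain_join f <= chain_join g.
Proof.
move=> fg; apply/joinsP => i _; rewrite /chain_join (bigD1 i) //=.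
by apply: lexUl; apply: leI2.
Qed.

(* Label [i] of [chain_join f] is label [i] of [f (i + 1)]: the terms of index
   [<= i] lie under [m i], the others under [f (i + 1)]. *)
Lemma mem_D_chain_join f (i : 'I_n) : f \in antitone_in ->
  (i \in D (chain_join f)) = (i \in D (f (inord i.+1))).
Proof.
case/antitone_inP => _ fdec; apply/idP/idP => iD.
  apply: (D_join_chain_elt D_c (leqnn i)); rewrite joinC.
  apply: (mem_D_le _ iD); apply/joinsP => k _; case: (leqP k i) => ki.
    by apply/lexUl/(le_trans (leIl _ _))/le_m => //; apply: ltnW.
  by apply/lexUr/(le_trans (leIr _ _))/fdec; rewrite inordK // ltnS ltn_ord.
apply: (mem_D_le _ (D_meet_chain_elt D_c (ltnSn i) (ltn_ord i) iD)).
by rewrite /chain_join (bigD1 (inord i.+1)) //= inordK ?ltnS ?ltn_ord // leUl.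
Qed.

Definition fmeet (f g : {ffun 'I_n.+1 -> L}) := [ffun i => f i `&` g i].
Definition fjoin (f g : {ffun 'I_n.+1 -> L}) := [ffun i => f i `|` g i].

Lemma antitone_in_meet f g :
  f \in antitone_in -> g \in antitone_in -> fmeet f g \in antitone_in.
Proof.
move=> /antitone_inP[fK fdec] /antitone_inP[gK gdec].
apply/antitone_inP; split=> [i|i j ij]; rewrite !ffunE; last by rewrite leI2 ?fdec ?gdec.
by case/orP: (chainK (fK i) (gK i)) => [/meet_l|/meet_r] ->.
Qed.

Lemma antitone_in_join f g :
  f \in antitone_in -> g \in antitone_in -> fjoin f g \in antitone_in.
Proof.
move=> /antitone_inP[fK fdec] /antitone_inP[gK gdec].
apply/antitone_inP; split=> [i|i j ij]; rewrite !ffunE; last by rewrite leU2 ?fdec ?gdec.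
by case/orP: (chainK (fK i) (gK i)) => [/join_r|/join_l] ->.
Qed.

Lemma chain_join_join f g : f \in antitone_in -> g \in antitone_in ->
  chain_join (fjoin f g) = chain_join f `|` chain_join g.
Proof.
move=> /antitone_inP[fK _] /antitone_inP[gK _]; apply/le_anti/andP; split.
  apply/joinsP => i _; rewrite ffunE comparable_meetUr ?chainK //.
  by apply: leU2; rewrite /chain_join (bigD1 i) //= leUl.
by rewrite leUx; apply/andP; split; apply: chain_join_le => i; rewrite ffunE ?leUl ?leUr.
Qed.

Lemma chain_join_meet f g : f \in antitone_in -> g \in antitone_in ->
  chain_join (fmeet f g) = chain_join f `&` chain_join g.
Proof.
move=> fA gA; apply: (D_inj D_c).
  rewrite lexI; apply/andP; split; apply: chain_join_le => i.
    by rewrite ffunE leIl.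
  by rewrite ffunE leIr.
apply/subsetP => i iD.
have /(mem_D_le (leIl _ _)) := iD; have /(mem_D_le (leIr _ _)) := iD.
rewrite !mem_D_chain_join ?antitone_in_meet // ffunE.
move: fA gA => /antitone_inP[fK _] /antitone_inP[gK _].
by case/orP: (chainK (fK (inord i.+1)) (gK (inord i.+1))) => [/meet_l|/meet_r] ->.
Qed.

Definition chain_joins : {set L} := [set chain_join f | f in antitone_in].

Lemma chain_joins_closed : meet_join_closed chain_joins.
Proof.
apply/forall_inP => _ /imsetP[f fA ->]; apply/forall_inP => _ /imsetP[g gA ->].
apply/andP; split; apply/imsetP.
  by exists (fmeet f g); [apply: antitone_in_meet | rewrite chain_join_meet].
by exists (fjoin f g); [apply: antitone_in_join | rewrite chain_join_join].
Qed.

Lemma chain_joins_distributive : distributive_set chain_joins.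
Proof.
apply/forall_inP => _ /imsetP[f fA ->]; apply/forall_inP => _ /imsetP[g gA ->].
apply/forall_inP => _ /imsetP[h hA ->]; apply/eqP.
rewrite -chain_join_join // -chain_join_meet ?antitone_in_join //.
rewrite -!chain_join_meet // -chain_join_join ?antitone_in_meet //.
congr chain_join; apply/ffunP => i; rewrite !ffunE comparable_meetUr //.
by move: gA hA => /antitone_inP[gK _] /antitone_inP[hK _]; apply: chainK.
Qed.

Hypotheses (botK : \bot \in K) (topK : \top \in K).

Lemma chain_elt_in_chain_joins j : (j <= n)%N -> m j \in chain_joins.
Proof.
move=> jn; apply/imsetP; exists [ffun i : 'I_n.+1 => if (i <= j)%N then \top else \bot].
  apply/antitone_inP; split=> [i|i k ik]; rewrite !ffunE; first by case: ifP.
  by case: ifP => kj; rewrite ?le0x // (leq_trans ik kj).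
apply/le_anti/andP; split.
  by rewrite /chain_join (bigD1 (inord j)) //= ffunE inordK ?ltnS // leqnn meetx1 leUl.
apply/joinsP => i _; rewrite ffunE; case: ifP => ij; last by rewrite meetx0 le0x.
by rewrite meetx1 le_m.
Qed.

Lemma mem_chain_joins x : x \in K -> x \in chain_joins.
Proof.
move=> xK; apply/imsetP; exists [ffun _ => x].
  by apply/antitone_inP; split=> [i|i k ik]; rewrite !ffunE.
apply/le_anti/andP; split; last by apply/joinsP => i _; rewrite ffunE leIr.
by rewrite /chain_join (bigD1 ord_max) //= ffunE -size_c chain_elt_size // meet1x leUl.
Qed.

End ChainJoins.

Theorem label_sets_supersolvable : supersolvable (L := L).
Proof.
exists c; split=> // C chainC.
pose K := C :|: [set \bot; \top].
have chainK : {in K &, forall a b : L, (a >=< b)}.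
  move=> a b; rewrite !inE => /orP[aC|/orP[]/eqP->] /orP[bC|/orP[]/eqP->];
    rewrite /Order.comparable ?le0x ?lex1 ?orbT //.
  by move/forall_inP: chainC => /(_ a aC) /forall_inP /(_ b bC).
have botK : (\bot : L) \in K by rewrite !inE eqxx orbT.
have topK : (\top : L) \in K by rewrite !inE eqxx !orbT.
apply: (distributive_setS _ (chain_joins_distributive chainK)).
apply: gen_sublattice_min; last exact: chain_joins_closed chainK.
apply/subsetP => x; rewrite in_setU in_set => /orP[/chain_eltP[j jn ->]|xC].
  by apply: (chain_elt_in_chain_joins botK topK); rewrite -size_c.
by apply: mem_chain_joins; rewrite !inE xC.
Qed.

Section Graded.
Hypothesis graded : graded_rank (L := L) n.
Implicit Types (x y z s t u v : L).

Lemma D_bot : D \bot = set0.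
Proof. by rewrite -[\bot]/(m 0) D_chain_elt //; apply/setP => i; rewrite !inE. Qed.

Lemma D_top : D \top = setT.
Proof.
rewrite -(chain_elt_size chain_c) size_c D_chain_elt //.
by apply/setP => i; rewrite !inE ltn_ord.
Qed.

Lemma proper_D x y : x < y -> D x \proper D y.
Proof.
move=> xy; rewrite properEneq (D_mono D_c (ltW xy)) andbT.
apply/eqP => Dxy; have x_eq_y : x = y by apply: (D_inj D_c (ltW xy)); rewrite Dxy.
by move: xy; rewrite x_eq_y ltxx.
Qed.

Lemma card_D_maxchain s t c' : maxchain s t c' -> (#|D s| + size c' <= #|D t|)%N.
Proof.
elim: c' s => [|v c' IH] s; first by rewrite maxchain_nil addn0 => /eqP->.
rewrite maxchain_cons => /andP[/coversW/proper_D/proper_card sv /IH].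
by apply: leq_trans; rewrite /= addnS -addSn leq_add2r.
Qed.

Lemma covers_of_D x y (i : 'I_n) :
  x <= y -> i \notin D x -> D y = i |: D x -> covers x y.
Proof.
move=> xy iDx Dy; have xy' : x < y.
  by rewrite lt_neqAle xy andbT; apply: contraNneq iDx => yx; rewrite yx Dy setU11.
apply/andP; split=> //; apply/forallP => z; apply/negP => /andP[xz zy].
have := leq_ltn_trans (proper_card (proper_D xz)) (proper_card (proper_D zy)).
by rewrite Dy cardsU1 iDx ltnn.
Qed.

(* In a graded lattice a cover sits inside a maximal chain of length [n],
   along which [#|D|] must grow by exactly one at each step. *)
Lemma D_covers x y : covers x y -> exists2 i : 'I_n, i \notin D x & D y = i |: D x.
Proof.
move=> xy; have [c1 c1P] := exists_maxchain (le0x x).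
have [c2 c2P] := exists_maxchain (lex1 y).
have /graded : maxchain \bot \top (c1 ++ y :: c2).
  by apply: (maxchain_cat c1P); rewrite maxchain_cons xy.
rewrite size_cat /= => size_n.
have := card_D_maxchain c1P; rewrite D_bot cards0 add0n => size_c1.
have := card_D_maxchain c2P; rewrite D_top cardsT card_ord => size_c2.
have /properP[sub [i iy ix]] := proper_D (coversW xy).
exists i => //; apply/eqP; rewrite eq_sym eqEcard subUset sub1set iy sub /=.
rewrite cardsU1 ix add1n -(leq_add2r (size c2)); apply: leq_trans size_c2 _.
by rewrite -[X in (X <= _)%N]size_n addnS addSn ltnS leq_add2r.
Qed.

(* On a cover [x <. y], [D y :\: D x] is a singleton [{i}] ([D_covers]) and the
   label is [i + 1]; the value on other pairs is irrelevant. *)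
Definition D_label : labeling (L := L) :=
  fun x y => Posz (oapp (fun i : 'I_n => i.+1) 0%N [pick i in D y :\: D x]).

Lemma D_labelE x y (i : 'I_n) :
  i \notin D x -> D y = i |: D x -> D_label x y = Posz i.+1.
Proof.
move=> iDx Dy; rewrite /D_label; case: pickP => [j|/(_ i)] /=.
  by rewrite Dy !inE => /andP[/negbTE jDx]; rewrite jDx orbF => /eqP->.
by rewrite Dy !inE eqxx iDx.
Qed.

Lemma labels_DP s t c' : maxchain s t c' ->
  [/\ forall i : 'I_n, (Posz i.+1 \in labels D_label s c') = (i \in D t :\: D s),
      forall l, l \in labels D_label s c' -> exists i : 'I_n, l = Posz i.+1
    & uniq (labels D_label s c')].
Proof.
elim: c' s => [|v c' IH] s.
  by rewrite maxchain_nil => /eqP->; split=> // i; rewrite setDv inE.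
rewrite maxchain_cons => /andP[sv vt]; have [memc' rangec' uniqc'] := IH _ vt.
have [i0 i0s Dv] := D_covers sv.
have i0t : i0 \in D t.
  by apply: (subsetP (D_mono D_c (maxchain_le vt))); rewrite Dv setU11.
rewrite labels_cons (D_labelE i0s Dv); split.
- move=> i; rewrite inE memc' eqz_nat eqSS val_eqE Dv !inE.
  by case: eqP => [->|_]; rewrite ?i0t ?i0s.
- by move=> l; rewrite inE => /orP[/eqP->|/rangec' //]; exists i0.
- by rewrite /= uniqc' andbT memc' Dv !inE eqxx.
Qed.

Lemma D_join_meet s t j : s <= t -> (j <= n)%N ->
  D (s `|` (m j `&` t)) = D s :|: (D t :&: [set i : 'I_n | (i < j)%N]).
Proof.
move=> st jn; apply/eqP; rewrite eqEsubset; apply/andP; split; last first.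
  rewrite subUset (D_mono D_c (leUl _ _)) /=; apply/subsetP => i; rewrite !inE.
  by case/andP => it ij; apply: (mem_D_le (leUr _ _) (D_meet_chain_elt D_c ij jn it)).
have le_st : s `|` (m j `&` t) <= (s `|` m j) `&` t.
  by rewrite leUx !lexI leUl st leIr /= andbT (le_trans (leIl _ _) (leUr _ _)).
apply/subsetP => i iD; rewrite !inE.
have iDsm := mem_D_le (le_trans le_st (leIl _ _)) iD.
have iDt := mem_D_le (le_trans le_st (leIr _ _)) iD.
case: (leqP j i) => [ji|_]; last by rewrite iDt orbT.
by rewrite (D_join_chain_elt D_c ji iDsm).
Qed.

Section GreedyCover.
Variables (s t : L) (i0 : 'I_n).
Hypotheses (st : s <= t) (i0_in : i0 \in D t :\: D s).
Hypothesis i0_min : forall i : 'I_n, i \in D t :\: D s -> (i0 <= i)%N.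
Local Notation u := (s `|` (m i0.+1 `&` t)).

Lemma D_greedy : D u = i0 |: D s.
Proof.
move: i0_in; rewrite inE => /andP[i0s i0t].
rewrite D_join_meet ?ltn_ord //; apply/setP => i; rewrite !inE ltnS.
case: (eqVneq i i0) => [->|ne] /=; first by rewrite i0t leqnn orbT.
case iDs : (i \in D s) => //=; apply/negP => /andP[it ii0].
have i0i : (i0 <= i)%N by apply: i0_min; rewrite inE iDs it.
by move: ne; rewrite -val_eqE /= eqn_leq ii0 i0i.
Qed.

Lemma covers_greedy : covers s u.
Proof. by apply: covers_of_D (leUl _ _) _ D_greedy; case/setDP: i0_in. Qed.

Lemma greedy_le : u <= t.
Proof. by rewrite leUx st leIr. Qed.

(* The least new label [i0 + 1] can only be achieved by the greedy cover: for
   such a cover [v], the element [(v `|` m (i0 + 1)) `&` t] has the label set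
   of [v], hence equals [v], and so lies above [u]. *)
Lemma greedy_unique v : covers s v -> v <= t -> D v = i0 |: D s -> v = u.
Proof.
move=> sv vt Dv; pose w := (v `|` m i0.+1) `&` t.
have vw : v <= w by rewrite lexI leUl vt.
have w_eq_v : w = v.
  apply/esym/(D_inj D_c vw)/subsetP => i iw.
  have iD1 : i \in D (v `|` m i0.+1) by apply: mem_D_le iw; apply: leIl.
  have it : i \in D t by apply: mem_D_le iw; apply: leIr.
  case: (leqP i0.+1 i) => ii0; first exact: (D_join_chain_elt D_c ii0 iD1).
  rewrite Dv !inE; case iDs : (i \in D s); rewrite ?orbT //= -val_eqE eqn_leq.
  by rewrite -ltnS ii0 i0_min // inE iDs.
have uv : u <= v.
  by rewrite leUx (ltW (coversW sv)) -[X in _ <= X]w_eq_v leI2 ?leUr.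
exact/esym/(covers_le_eq sv (coversW covers_greedy)).
Qed.

Lemma greedy_chain_increasing c0 : maxchain u t c0 ->
  increasing (labels D_label u c0) -> increasing (labels D_label s (u :: c0)).
Proof.
move=> c0P c0_inc; have [mem_c0 range_c0 _] := labels_DP c0P.
have [i0t i0s] := setDP i0_in.
rewrite labels_cons (D_labelE i0s D_greedy) increasing_cons c0_inc andbT.
apply/allP => _ /[dup] /range_c0[i ->]; rewrite mem_c0 !inE D_greedy !inE negb_or.
case/andP => /andP[_ iDs] it; rewrite lez_nat ltnS; apply: i0_min.
exact/setDP.
Qed.

Lemma not_greedy_chain v c1 (w : seq int) : covers s v -> maxchain v t c1 -> v != u ->
  ~~ increasing (labels D_label s (v :: c1)) /\
  lexlt (Posz i0.+1 :: w) (labels D_label s (v :: c1)).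
Proof.
move=> sv c1P nvu; have [l ls Dv] := D_covers sv.
have lt : l \in D t by apply: (subsetP (D_mono D_c (maxchain_le c1P))); rewrite Dv setU11.
have nli0 : l != i0.
  apply: contraNneq nvu => li0; apply/eqP/greedy_unique => //.
    exact: maxchain_le c1P.
  by rewrite -li0.
have i0l : (i0 < l)%N by rewrite ltn_neqAle eq_sym val_eqE nli0 i0_min // inE ls lt.
have [i0t i0s] := setDP i0_in; have [mem_c1 _ _] := labels_DP c1P.
rewrite labels_cons (D_labelE ls Dv); split; last by rewrite /= ltz_nat ltnS i0l.
rewrite increasing_cons; apply/nandP; left; apply/allP => /(_ (Posz i0.+1)).
rewrite mem_c1 Dv !inE eq_sym (negbTE nli0) i0s i0t lez_nat ltnS leqNgt i0l.
by move/(_ isT).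
Qed.

End GreedyCover.

Lemma label_sets_EL_interval s t : s <= t -> EL_interval D_label s t.
Proof.
move: {2}_.+1 (ltnSn #|D t :\: D s|) => k; elim: k s => // k IH s.
rewrite ltnS => sizes st; have [<-|nst] := eqVneq s t.
  exists [::]; split=> [||c' /maxchain_self ->]; rewrite ?maxchain_nil ?eqxx //.
have /proper_D/properP[_ [i1 i1t i1s]] : s < t by rewrite lt_neqAle nst st.
have i1_in : i1 \in D t :\: D s by rewrite inE i1t i1s.
case: (arg_minnP (fun i : 'I_n => val i) i1_in) => i0 i0_in i0_min.
set u := s `|` (m i0.+1 `&` t).
have Du : D u = i0 |: D s := D_greedy st i0_in i0_min.
have ut : u <= t := greedy_le i0 st.
have /IH /(_ ut) [c0 [c0P c0_inc c0_min]] : (#|D t :\: D u| < k)%N.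
  apply: leq_trans sizes; apply: proper_card; apply/properP; split.
    by apply/subsetP => i; rewrite !inE Du !inE negb_or => /andP[/andP[_ ->] ->].
  by exists i0; rewrite // !inE Du setU11.
have first_label : D_label s u = Posz i0.+1.
  by apply: D_labelE Du; case/setDP: i0_in.
exists (u :: c0); split; first by rewrite maxchain_cons covers_greedy.
  exact: (greedy_chain_increasing st i0_in i0_min).
case=> [|v c1]; first by rewrite maxchain_nil (negbTE nst).
rewrite maxchain_cons [labels _ s (u :: _)]labels_cons first_label => /andP[sv c1P] neq.
have [vu|nvu] := eqVneq v u; last exact: (not_greedy_chain st i0_in i0_min).
subst v; have c1c0 : c1 != c0 by apply: contraNneq neq => ->.
have [not_inc lt_c0] := c0_min c1 c1P c1c0.
rewrite labels_cons first_label increasing_cons (negbTE not_inc) andbF.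
by rewrite /= eqxx lt_c0 orbT.
Qed.

Lemma label_sets_perm c' : maxchain \bot \top c' ->
  perm_eq (labels D_label \bot c') (map Posz (iota 1 n)).
Proof.
move=> c'P; have [mem_c' range_c' uniq_c'] := labels_DP c'P.
apply: uniq_perm => //; first exact: uniq_iota_Posz.
move=> l; apply/idP/idP => [/range_c'[i ->]|/mem_iota_PoszP[i ->]].
  exact: mem_iota_Posz.
by rewrite mem_c' D_top D_bot !inE.
Qed.

Theorem label_sets_Sn_EL : Sn_EL_labeling n D_label.
Proof. by split=> [s t|]; [apply: label_sets_EL_interval | apply: label_sets_perm]. Qed.

End Graded.
End LabelSetsTheory.

Section MChainLabelSets.
Context {disp : Order.disp_t} {L : finTBLatticeType disp}.
Local Open Scope order_scope.
Variables (n : nat) (c : seq L).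
Hypotheses (chain_c : maxchain \bot \top c) (size_c : size c = n).
Hypothesis c_distr : forall C : {set L}, is_chain C ->
  distributive_set (gen_sublattice ([set x in \bot :: c] :|: C)).
Local Notation m := (chain_elt c).
Local Notation le_m := (le_m chain_c size_c).
Implicit Types (x y z : L).

Definition chain_steps x : {set 'I_n} := [set i : 'I_n | ~~ (m i.+1 `&` x <= m i)].

Definition pair_sublattice x y := gen_sublattice ([set z in \bot :: c] :|: [set x; y]).

Lemma pair_sublattice_distributive x y : x <= y -> distributive_set (pair_sublattice x y).
Proof.
move=> xy; apply: c_distr; apply/forall_inP => a; rewrite !inE => aP.
apply/forall_inP => b; rewrite !inE => bP.
by case/orP: aP => /eqP->; case/orP: bP => /eqP->; rewrite ?lexx ?xy ?orbT.
Qed.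

Lemma pair_sublattice_l x y : x \in pair_sublattice x y.
Proof. by apply: (subsetP (sub_gen_sublattice _)); rewrite !inE eqxx orbT. Qed.

Lemma pair_sublattice_r x y : y \in pair_sublattice x y.
Proof. by apply: (subsetP (sub_gen_sublattice _)); rewrite !inE eqxx !orbT. Qed.

Lemma chain_elt_pair_sublattice x y j : (j <= n)%N -> m j \in pair_sublattice x y.
Proof.
move=> jn; apply: (subsetP (sub_gen_sublattice _)).
by rewrite in_setU in_set mem_chain_elt ?size_c.
Qed.

Lemma chain_steps_chain_elt j :
  (j <= n)%N -> chain_steps (m j) = [set i : 'I_n | (i < j)%N].
Proof.
move=> jn; apply/setP => i; rewrite !inE; case: (ltnP i j) => ij.
  have lt_step : m i < m i.+1 by apply: lt_chain_elt; rewrite ?size_c.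
  by rewrite (meet_l (le_m ij jn)) (lt_geF lt_step).
by rewrite meet_r ?le_m // ltnW.
Qed.

Lemma chain_steps_mono x y : x <= y -> chain_steps x \subset chain_steps y.
Proof.
move=> xy; apply/subsetP => i; rewrite !inE; apply: contra => /(le_trans _); apply.
by rewrite leI2.
Qed.

(* Since [m k <. m (k + 1)], a step seen by [x] gives
   [m (k + 1) = m k `|` (m (k + 1) `&` x)]; distribute [y] over it. *)
Lemma meet_step_le x y (k : 'I_n) : x <= y -> k \in chain_steps x ->
  m k `&` y <= x -> m k.+1 `&` y <= x.
Proof.
rewrite inE => xy kx kyx; have kn := ltn_ord k.
have step : m k `|` (m k.+1 `&` x) = m k.+1.
  apply: (covers_le_eq (chain_elt_covers chain_c _)); rewrite ?size_c //.
    by rewrite lt_neqAle leUl andbT; apply: contraNneq kx => ->; rewrite leUr.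
  by rewrite leUx leIl ltW ?lt_chain_elt ?size_c.
have distr := meetUr_in (pair_sublattice_distributive xy) (pair_sublattice_r x y)
  (chain_elt_pair_sublattice x y (ltnW kn))
  (gen_sublatticeI (chain_elt_pair_sublattice x y kn) (pair_sublattice_l x y)).
by rewrite meetC -step distr leUx meetC kyx meetA leIr.
Qed.

Lemma chain_steps_inj x y : x <= y -> chain_steps y \subset chain_steps x -> x = y.
Proof.
move=> xy /subsetP yx; apply/le_anti; rewrite xy /=.
suff /(_ n (leqnn n)) : forall k, (k <= n)%N -> m k `&` y <= x.
  by rewrite -size_c chain_elt_size // meet1x.
elim=> [|k IH] kn; first by rewrite meet0x le0x.
have [ky|] := boolP (Ordinal kn \in chain_steps y).
  exact: meet_step_le xy (yx _ ky) (IH (ltnW kn)).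
rewrite inE negbK => kyk; apply: le_trans (IH (ltnW kn)).
by rewrite lexI kyk leIr.
Qed.

Lemma chain_steps_meet (i : 'I_n) j z : (i < j)%N -> (j <= n)%N ->
  i \in chain_steps z -> i \in chain_steps (m j `&` z).
Proof. by move=> ij jn; rewrite !inE meetA (meet_l (le_m ij jn)). Qed.

Lemma chain_steps_join (i : 'I_n) j y : (j <= i)%N ->
  i \in chain_steps (y `|` m j) -> i \in chain_steps y.
Proof.
move=> ji; rewrite !inE; apply: contra => yi.
have i_le_n : (i <= n)%N := ltnW (ltn_ord i).
have jn : (j <= n)%N := leq_trans ji i_le_n.
rewrite (meetUr_in (pair_sublattice_distributive (lexx y))
  (chain_elt_pair_sublattice y y (ltn_ord i)) (pair_sublattice_l y y)
  (chain_elt_pair_sublattice y y jn)).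
by rewrite leUx yi (le_trans (leIr _ _) (le_m ji i_le_n)).
Qed.

Lemma chain_steps_label_sets : label_sets c chain_steps.
Proof.
split; [exact: chain_steps_chain_elt | exact: chain_steps_mono | exact: chain_steps_inj
       | exact: chain_steps_meet | exact: chain_steps_join].
Qed.

End MChainLabelSets.

Section SnELLabelSets.
Context {disp : Order.disp_t} {L : finTBLatticeType disp}.
Local Open Scope order_scope.
Variables (n : nat) (lam : labeling (L := L)).
Hypothesis lam_EL : EL_labeling lam.
Hypothesis lam_Sn : forall c : seq L, maxchain \bot \top c ->
  perm_eq (labels lam \bot c) (map Posz (iota 1 n)).
Implicit Types (x y z s t u v : L) (c : seq L).

Definition chain_to x : seq L := xchoose (exists_maxchain (le0x x)).
Definition chain_from x : seq L := xchoose (exists_maxchain (lex1 x)).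

Lemma chain_toP x : maxchain \bot x (chain_to x).
Proof. exact: xchooseP. Qed.

Lemma chain_fromP x : maxchain x \top (chain_from x).
Proof. exact: xchooseP. Qed.

Lemma chain_to_bot : chain_to \bot = [::].
Proof. exact: maxchain_self (chain_toP _). Qed.

Lemma chain_from_top : chain_from \top = [::].
Proof. exact: maxchain_self (chain_fromP _). Qed.

Definition label_set x : {set 'I_n} :=
  [set i : 'I_n | Posz i.+1 \in labels lam \bot (chain_to x)].

(* Extending a chain of [s, t] to a maximal chain of [L] shows that its labels
   are exactly those of [1..n] missing below [s] and above [t]. *)
Lemma labels_compl s t c : maxchain s t c ->
  uniq (labels lam s c) /\ forall l, (l \in labels lam s c) =
    [&& l \in map Posz (iota 1 n), l \notin labels lam \bot (chain_to s)
      & l \notin labels lam t (chain_from t)].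
Proof.
move=> cP; have full : maxchain \bot \top (chain_to s ++ c ++ chain_from t).
  exact: maxchain_cat (chain_toP s) (maxchain_cat cP (chain_fromP t)).
have := lam_Sn full; rewrite !labels_cat (maxchain_last (chain_toP s)).
rewrite (maxchain_last cP) => perm_full.
have := uniq_iota_Posz n; rewrite -(perm_uniq perm_full) !cat_uniq.
case/and3P => _ no_below /and3P[uniq_c no_above _]; split=> // l.
apply/idP/idP => [lc|/and3P[l_n l_below l_above]]; last first.
  move: l_n; rewrite -(perm_mem perm_full) !mem_cat.
  by rewrite (negbTE l_below) (negbTE l_above) orbF.
rewrite -(perm_mem perm_full) !mem_cat lc orbT /=.
apply/andP; split; apply/negP => l_out.
  by move/hasP: no_below; apply; exists l; rewrite // mem_cat lc.
by move/hasP: no_above; apply; exists l.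
Qed.

Lemma label_set_from x (i : 'I_n) :
  (i \in label_set x) = (Posz i.+1 \notin labels lam x (chain_from x)).
Proof.
have [_ mem_to] := labels_compl (chain_toP x).
by rewrite inE mem_to mem_iota_Posz chain_to_bot.
Qed.

Lemma mem_labels s t c : maxchain s t c -> forall i : 'I_n,
  (Posz i.+1 \in labels lam s c) = (i \in label_set t :\: label_set s).
Proof.
move=> cP i; have [_ ->] := labels_compl cP.
by rewrite mem_iota_Posz in_setD (label_set_from t) inE.
Qed.

Lemma labels_range s t c l : maxchain s t c ->
  l \in labels lam s c -> exists i : 'I_n, l = Posz i.+1.
Proof. by move=> cP; have [_ ->] := labels_compl cP; case/and3P => /mem_iota_PoszP. Qed.

Lemma label_set_bot : label_set \bot = set0.
Proof. by apply/setP => i; rewrite inE chain_to_bot inE. Qed.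

Lemma label_set_top : label_set \top = setT.
Proof. by apply/setP => i; rewrite in_setT label_set_from chain_from_top. Qed.

Lemma label_set_mono x y : x <= y -> label_set x \subset label_set y.
Proof.
move=> xy; have [c cP] := exists_maxchain xy.
have full := maxchain_cat cP (chain_fromP y).
apply/subsetP => i ix; rewrite label_set_from.
have := mem_labels full i; rewrite labels_cat (maxchain_last cP) mem_cat.
by rewrite label_set_top in_setD ix /= => /negbT; rewrite negb_or => /andP[].
Qed.

Lemma label_set_inj x y : x <= y -> label_set y \subset label_set x -> x = y.
Proof.
move=> xy /subsetP yx; have [[|v c] cP] := exists_maxchain xy; first exact/eqP.
have [i li] := labels_range cP (mem_head _ _).
have := mem_head (lam x v) (labels lam v c); rewrite -labels_cons li (mem_labels cP).
by rewrite in_setD => /andP[/negP ix /yx].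
Qed.

Lemma label_set_covers s v : covers s v ->
  exists i : 'I_n, lam s v = Posz i.+1 /\ label_set v = i |: label_set s.
Proof.
move=> sv; have sv_chain : maxchain s v [:: v].
  by rewrite maxchain_cons sv maxchain_nil eqxx.
have [i li] := labels_range sv_chain (mem_head _ _); exists i; split=> //.
apply/setP => k; have := mem_labels sv_chain k.
rewrite labels_cons li inE eqz_nat eqSS val_eqE in_setD in_setU1; case: eqP => [->|_] /=.
  by move/esym/andP=> [_ ->].
case ks : (k \in label_set s) => /=; last by move=> <-.
by rewrite (subsetP (label_set_mono (ltW (coversW sv))) k ks).
Qed.

Lemma exists_increasing s t : s <= t ->
  exists c, maxchain s t c /\ increasing (labels lam s c).
Proof. by move=> st; have [c [? ? _]] := lam_EL st; exists c. Qed.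

(* An increasing chain of [s, t] adds the labels of [label_set t :\: label_set s]
   in increasing order; [u] is the point where the labels reach [j]. *)
Lemma increasing_split s t c : maxchain s t c -> increasing (labels lam s c) ->
  forall j, exists u, [/\ s <= u, u <= t &
    label_set u = label_set s :|: (label_set t :&: [set i : 'I_n | (i < j)%N])].
Proof.
elim: c s => [|v c IH] s cP c_inc j.
  move: cP; rewrite maxchain_nil => /eqP <-; exists s; split=> //.
  by apply/setP => i; rewrite in_setU in_setI; case: (i \in label_set s).
move: (cP); rewrite maxchain_cons => /andP[sv vt].
have [i0 [li0 Dv]] := label_set_covers sv.
have i0t : i0 \in label_set t.
  by apply: (subsetP (label_set_mono (maxchain_le vt))); rewrite Dv setU11.
move: c_inc; rewrite labels_cons li0 increasing_cons => /andP[/allP above_i0 v_inc].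
case: (ltnP i0 j) => i0j.
  have [u [vu ut Du]] := IH v vt v_inc j.
  exists u; split=> //; first exact: le_trans (ltW (coversW sv)) vu.
  rewrite Du Dv; apply/setP => i; rewrite !in_setU in_set1 -orbA.
  by case: eqP => [->|] //=; rewrite in_setI i0t in_set i0j !orbT.
exists s; split=> //; first exact: maxchain_le cP.
apply/setP => i; rewrite in_setU in_setI [X in _ && X]inE.
case iDs : (i \in label_set s) => //=.
case iDt : (i \in label_set t) => //=; apply/esym/negbTE/negP => ij.
have : Posz i.+1 \in labels lam s (v :: c) by rewrite (mem_labels cP) in_setD iDs iDt.
rewrite labels_cons li0 inE eqz_nat eqSS => /orP[/eqP i_eq|/above_i0].
  by move: ij; rewrite i_eq ltnNge i0j.
by rewrite lez_nat ltnS leqNgt (leq_trans ij i0j).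
Qed.

Section IncreasingMaximalChain.
Variable cm : seq L.
Hypotheses (cm_chain : maxchain \bot \top cm) (cm_inc : increasing (labels lam \bot cm)).
Hypothesis cm_unique : forall c, maxchain \bot \top c ->
  increasing (labels lam \bot c) -> c = cm.
Local Notation m := (chain_elt cm).

Lemma size_cm : size cm = n.
Proof.
by rewrite -(size_pairmap lam \bot cm) (perm_size (lam_Sn cm_chain)) size_map size_iota.
Qed.

Lemma labels_cm : labels lam \bot cm = map Posz (iota 1 n).
Proof.
apply: (sorted_eq (leT := fun a b : int => (a <= b)%R)) (lam_Sn cm_chain) => //.
- exact: le_trans.
- by move=> a b /le_anti.
- by rewrite sorted_map; apply: sub_sorted (iota_sorted 1 n) => a b; rewrite /= lez_nat.
Qed.

Lemma label_set_cm j : (j <= n)%N -> label_set (m j) = [set i : 'I_n | (i < j)%N].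
Proof.
move=> jn; have /maxchain_split[+ _] : maxchain \bot \top (take j cm ++ drop j cm).
  by rewrite cat_take_drop.
rewrite last_take_chain_elt ?size_cm //.
move=> take_chain; apply/setP => i.
rewrite -[label_set (m j)]setD0 -label_set_bot -(mem_labels take_chain).
have <- : take j (labels lam \bot cm) = labels lam \bot (take j cm).
  rewrite -{1}(cat_take_drop j cm) labels_cat take_size_cat //.
  by rewrite size_pairmap size_takel ?size_cm.
rewrite labels_cm -map_take take_iota (minn_idPl jn) inE mem_map; last by move=> a b [].
by rewrite mem_iota add1n !ltnS.
Qed.

Lemma ltn_set_inj j k : (j <= n)%N -> (k <= n)%N ->
  [set i : 'I_n | (i < j)%N] = [set i : 'I_n | (i < k)%N] -> j = k.
Proof.
move=> jn kn /setP jk; case: (ltngtP j k) => // [lt_jk|lt_kj].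
  by have := jk (Ordinal (leq_trans lt_jk kn)); rewrite !inE ltnn lt_jk.
by have := jk (Ordinal (leq_trans lt_kj jn)); rewrite !inE ltnn lt_kj.
Qed.

(* Going up through [u] along increasing chains adds first the labels [< j],
   then the others: the result is increasing, hence is [cm]. *)
Lemma label_set_eq_cm u j : (j <= n)%N ->
  label_set u = [set i : 'I_n | (i < j)%N] -> u = m j.
Proof.
move=> jn Du; have [c1 [c1P c1_inc]] := exists_increasing (le0x u).
have [c2 [c2P c2_inc]] := exists_increasing (lex1 u).
have c12_inc : increasing (labels lam \bot (c1 ++ c2)).
  rewrite labels_cat (maxchain_last c1P); apply: increasing_cat => // a b a1 b2.
  have [[i a_eq] [k b_eq]] := (labels_range c1P a1, labels_range c2P b2).
  move: a1 b2; rewrite a_eq b_eq (mem_labels c1P) (mem_labels c2P).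
  rewrite label_set_bot label_set_top Du.
  by rewrite !inE /= andbT => ij; rewrite -leqNgt lez_nat ltnS => /(leq_trans ij)/ltnW.
have c12_cm := cm_unique (maxchain_cat c1P c2P) c12_inc.
have : u \in \bot :: cm.
  rewrite -c12_cm; have := mem_last \bot c1; rewrite (maxchain_last c1P) !inE mem_cat.
  by case/orP => ->; rewrite ?orbT.
case/chain_eltP => k; rewrite size_cm => kn u_k; move: Du.
by rewrite u_k label_set_cm // => /esym/ltn_set_inj-> //.
Qed.

Lemma le_cm_of_label_set x j : (j <= n)%N ->
  label_set x \subset [set i : 'I_n | (i < j)%N] -> x <= m j.
Proof.
move=> jn sub; have [c [cP c_inc]] := exists_increasing (lex1 x).
have [u [xu _ Du]] := increasing_split cP c_inc j.
suff -> : m j = u by [].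
by apply/esym/label_set_eq_cm; rewrite // Du label_set_top setTI; apply/setUidPr.
Qed.

Lemma cm_le_of_label_set x j : (j <= n)%N ->
  [set i : 'I_n | (i < j)%N] \subset label_set x -> m j <= x.
Proof.
move=> jn sub; have [c [cP c_inc]] := exists_increasing (le0x x).
have [u [_ ux Du]] := increasing_split cP c_inc j.
suff -> : m j = u by [].
by apply/esym/label_set_eq_cm; rewrite // Du label_set_bot set0U; apply/setIidPr.
Qed.

Lemma label_set_meet (i : 'I_n) j z : (i < j)%N -> (j <= n)%N ->
  i \in label_set z -> i \in label_set (m j `&` z).
Proof.
move=> ij jn iz; have [c [cP c_inc]] := exists_increasing (le0x z).
have [u [_ uz Du]] := increasing_split cP c_inc j.
have um : u <= m j.
  by apply: le_cm_of_label_set; rewrite // Du label_set_bot set0U subsetIr.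
apply: (subsetP (label_set_mono (_ : u <= m j `&` z))); first by rewrite lexI um uz.
by rewrite Du in_setU in_setI iz [X in _ && X]inE ij orbT.
Qed.

Lemma label_set_join (i : 'I_n) j y : (j <= i)%N ->
  i \in label_set (y `|` m j) -> i \in label_set y.
Proof.
move=> ji iyj; have jn : (j <= n)%N := leq_trans ji (ltnW (ltn_ord i)).
have [c [cP c_inc]] := exists_increasing (leUl y (m j)).
have [u [yu uyj Du]] := increasing_split cP c_inc j.
have mu : m j <= u.
  apply: cm_le_of_label_set; rewrite // Du; apply/subsetP => k kj.
  rewrite in_setU in_setI kj andbT; apply/orP; right.
  by apply: (subsetP (label_set_mono (leUr (m j) y))); rewrite label_set_cm.
have u_yj : u = y `|` m j by apply/le_anti; rewrite uyj leUx yu mu.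
by move: iyj; rewrite -u_yj Du in_setU in_setI [X in _ && X]inE ltnNge ji andbF orbF.
Qed.

Lemma label_set_label_sets : label_sets cm label_set.
Proof.
split; [exact: label_set_cm | exact: label_set_mono | exact: label_set_inj
       | exact: label_set_meet | exact: label_set_join].
Qed.

End IncreasingMaximalChain.
End SnELLabelSets.

Theorem mainTheorem1 (disp : Order.disp_t) (L : finTBLatticeType disp) (n : nat) :
  @graded_rank disp L n ->
  (@supersolvable disp L <-> exists lam : @labeling disp L, Sn_EL_labeling n lam).
Proof.
move=> graded; split.
  case=> c [c_chain c_distr]; have size_c : size c = n := graded c c_chain.
  have D_c := chain_steps_label_sets c_chain size_c c_distr.
  by exists (D_label (chain_steps n c)); apply: label_sets_Sn_EL D_c graded.
case=> lam [lam_EL lam_Sn].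
have [cm [cm_chain cm_inc cm_min]] := lam_EL _ _ (le0x \top%O).
have cm_unique c : maxchain \bot%O \top%O c -> increasing (labels lam \bot%O c) -> c = cm.
  by move=> c_chain c_inc; apply/eqP; apply: contraTT c_inc => /(cm_min c c_chain)[].
have D_cm := label_set_label_sets lam_EL lam_Sn cm_chain cm_inc cm_unique.
exact: label_sets_supersolvable cm_chain (size_cm lam_Sn cm_chain) D_cm.
Qed.
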